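(* Let $\Gamma$ be a group and $S$ a $\Gamma$-graded inverse semigroup. Then $S$ is $0$-$E$-unitary if and only if the inverse semigroup $S_\varepsilon$ is $0$-$E$-unitary.
   Context: Semigroups have a zero; $S$ is $\Gamma$-graded via $\deg:S\setminus\{0\}\to\Gamma$ with $\deg(st)=\deg(s)\deg(t)$ whenever $st\neq0$; $S_\alpha=\deg^{-1}(\alpha)\cup\{0\}$; $\varepsilon$ is the identity of $\Gamma$. $E(S)$ is the set of idempotents. The natural partial order on an inverse semigroup: $s\le t$ iff $s=tu$ for some $u\in E(S)$. An inverse semigroup $S$ with zero is $0$-$E$-unitary if for all $s\in S$ and $u\in E(S)\setminus\{0\}$ with $u\le s$, one has $s\in E(S)$. *)

Record Group := {
  g_car :> Type;
  g_mul : g_car -> g_car -> g_car;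
  g_one : g_car;
  g_inv : g_car -> g_car;
  g_assoc : forall a b c, g_mul a (g_mul b c) = g_mul (g_mul a b) c;
  g_one_l : forall a, g_mul g_one a = a;
  g_inv_l : forall a, g_mul (g_inv a) a = g_one
}.

Record InvSemigroup0 := {
  s_car :> Type;
  s_mul : s_car -> s_car -> s_car;
  s_zero : s_car;
  s_assoc : forall a b c, s_mul a (s_mul b c) = s_mul (s_mul a b) c;
  s_zero_l : forall a, s_mul s_zero a = s_zero;
  s_zero_r : forall a, s_mul a s_zero = s_zero;
  s_inverse : forall s, exists! t, s_mul (s_mul s t) s = s /\ s_mul (s_mul t s) t = t
}.

(* deg : S \ {0} -> Gamma, represented as a total function whose value at 0 is
   irrelevant; deg (s t) = deg s deg t whenever s t <> 0. *)
Definition is_grading (G : Group) (S : InvSemigroup0) (deg : S -> G) : Prop :=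
  forall s t : S, s_mul S s t <> s_zero S ->
    deg (s_mul S s t) = g_mul G (deg s) (deg t).

Definition homog (G : Group) (S : InvSemigroup0) (deg : S -> G) (a : G) (s : S) : Prop :=
  s = s_zero S \/ (s <> s_zero S /\ deg s = a).

Definition idempotent (S : InvSemigroup0) (e : S) : Prop := s_mul S e e = e.

(* 0-E-unitarity of the inverse subsemigroup of S carried by the predicate P
   (elements, idempotents and natural partial order all taken inside P):
   s <= t in P iff s = t u for some idempotent u in P. *)
Definition zeroEunitary_on (S : InvSemigroup0) (P : S -> Prop) : Prop :=
  forall s u : S, P s -> P u -> idempotent S u -> u <> s_zero S ->
    (exists v : S, P v /\ idempotent S v /\ u = s_mul S s v) ->
    idempotent S s.

Definition zeroEunitary (S : InvSemigroup0) : Prop :=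
  zeroEunitary_on S (fun _ => True).


(* A nonzero idempotent e satisfies deg e = deg e * deg e, so it has degree 1.
   Hence if a nonzero idempotent u lies below s, i.e. u = s v with v idempotent, then
   deg s = deg u * (deg v)^-1 = 1 and the whole witness lives in S_1; thus the
   0-E-unitarity of S_1 already covers every instance in S.
   The converse is just restriction to a subsemigroup. *)

Lemma g_mulI (G : Group) (a b c : G) : g_mul G a b = g_mul G a c -> b = c.
Proof.
  intro H. rewrite <- (g_one_l G b), <- (g_one_l G c), <- (g_inv_l G a).
  rewrite <- !g_assoc, H. reflexivity.
Qed.

Lemma g_mulg1 (G : Group) (a : G) : g_mul G a (g_one G) = a.
Proof.
  apply (g_mulI G (g_inv G a)). rewrite g_assoc, g_inv_l, g_one_l. reflexivity.
Qed.

Lemma g_idem_eq1 (G : Group) (a : G) : g_mul G a a = a -> a = g_one G.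
Proof.
  intro H. apply (g_mulI G a). rewrite H, g_mulg1. reflexivity.
Qed.

Lemma zeroEunitary_on_sub (S : InvSemigroup0) (P Q : S -> Prop) :
  (forall s, P s -> Q s) -> zeroEunitary_on S Q -> zeroEunitary_on S P.
Proof.
  intros PQ H s u Ps Pu Hu Hu0 [v [Pv [Hv Huv]]].
  apply (H s u (PQ s Ps) (PQ u Pu) Hu Hu0).
  exists v. split; [apply PQ; exact Pv | split; assumption].
Qed.

Lemma s_mul_neq0_l (S : InvSemigroup0) (s t : S) :
  s_mul S s t <> s_zero S -> s <> s_zero S.
Proof. intros H E. apply H. rewrite E. apply s_zero_l. Qed.

Lemma s_mul_neq0_r (S : InvSemigroup0) (s t : S) :
  s_mul S s t <> s_zero S -> t <> s_zero S.
Proof. intros H E. apply H. rewrite E. apply s_zero_r. Qed.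

Section Grading.

Variables (G : Group) (S : InvSemigroup0) (deg : S -> G).
Hypothesis Hdeg : is_grading G S deg.

Lemma deg_idempotent (e : S) :
  idempotent S e -> e <> s_zero S -> deg e = g_one G.
Proof.
  intros He He0. apply g_idem_eq1.
  rewrite <- Hdeg by (rewrite He; exact He0). rewrite He. reflexivity.
Qed.

Lemma deg_below_idempotent (s u v : S) :
  idempotent S u -> u <> s_zero S -> idempotent S v -> u = s_mul S s v ->
  deg s = g_one G.
Proof.
  intros Hu Hu0 Hv Huv.
  assert (Hsv : s_mul S s v <> s_zero S) by (rewrite <- Huv; exact Hu0).
  pose proof (Hdeg s v Hsv) as E. rewrite <- Huv in E.
  rewrite (deg_idempotent u Hu Hu0), (deg_idempotent v Hv (s_mul_neq0_r S s v Hsv)),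
    g_mulg1 in E.
  symmetry. exact E.
Qed.

Lemma zeroEunitary_of_homog_one :
  zeroEunitary_on S (homog G S deg (g_one G)) -> zeroEunitary S.
Proof.
  intros H s u _ _ Hu Hu0 [v [_ [Hv Huv]]].
  assert (Hsv : s_mul S s v <> s_zero S) by (rewrite <- Huv; exact Hu0).
  assert (Hs0 := s_mul_neq0_l S s v Hsv).
  assert (Hv0 := s_mul_neq0_r S s v Hsv).
  apply (H s u).
  - right. split; [exact Hs0 | exact (deg_below_idempotent s u v Hu Hu0 Hv Huv)].
  - right. split; [exact Hu0 | exact (deg_idempotent u Hu Hu0)].
  - exact Hu.
  - exact Hu0.
  - exists v. split; [| split; assumption].
    right. split; [exact Hv0 | exact (deg_idempotent v Hv Hv0)].
Qed.

End Grading.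

Theorem proposition2p6 (G : Group) (S : InvSemigroup0) (deg : S -> G)
  (Hdeg : is_grading G S deg) :
  zeroEunitary S <-> zeroEunitary_on S (homog G S deg (g_one G)).
Proof.
  split.
  - apply zeroEunitary_on_sub. intros s _. exact I.
  - exact (zeroEunitary_of_homog_one G S deg Hdeg).
Qed.
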